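(* Let $n\ge1$ and suppose $N_c\ge 2n$ and $N_f\ge 2n$. With the mesonic polynomials $\mathcal O_\alpha$ ($\alpha\in S_{2n}$) defined below, $$\dim_{\mathbb C}\operatorname{span}\{\mathcal O_\alpha:\alpha\in S_{2n}\}=\frac1{|H|}\sum_{\gamma\in H}\sum_{\alpha\in S_{2n}}\delta(\gamma\alpha\gamma^{-1}\alpha^{-1})=\frac1{|H|}\sum_{\sigma\in S_{2n}}\sum_{\gamma\in S_{2n}}\delta(\gamma\sigma\gamma^{-1}\sigma^{-1})\,\delta(\Sigma_0\gamma\Sigma_0\gamma^{-1}),$$ i.e. it equals the number of orbits of $S_{2n}$ under conjugation by $H$.
   Context: $\Sigma_0=(1\,2)(3\,4)\cdots(2n-1\,2n)\in S_{2n}$, $H=S_n[S_2]=\{\gamma\in S_{2n}:\gamma\Sigma_0\gamma^{-1}=\Sigma_0\}$ (order $2^nn!$), and $\delta(g)=1$ if $g$ is the identity and $0$ otherwise. For $a=1,\dots,N_f$, $\Phi_a$ is an $N_c\times N_c$ matrix of commuting indeterminates (distinct for distinct $(a,i,j)$), and for $\alpha\in S_{2n}$, $\mathcal O_\alpha=\sum_{a_1,\dots,a_n=1}^{N_f}\sum_{i_1,\dots,i_{2n}=1}^{N_c}\prod_{k=1}^{2n}(\Phi_{c_k})_{i_k\,i_{\alpha(k)}}$ with $c_{2m-1}=c_{2m}=a_m$. *)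

From HB Require Import structures.
From mathcomp Require Import all_boot all_order all_algebra all_fingroup all_field.
From mathcomp Require Import boolp.
From mathcomp Require Import mpoly.
Set Implicit Arguments. Unset Strict Implicit. Unset Printing Implicit Defensive.
Import GRing.Theory.
Local Open Scope ring_scope.

Definition lin_indep (F : fieldType) (V : lmodType F) (I : finType)
  (f : I -> V) (S : {set I}) : Prop :=
  forall c : I -> F, \sum_(i in S) c i *: f i = 0 -> forall i, i \in S -> c i = 0.

(* dimension of span{f i : i in I} = maximal size of a linearly independent
   subfamily (the rank of the family) *)
Definition span_dim (F : fieldType) (V : lmodType F) (I : finType)
  (f : I -> V) : nat :=
  \max_(S : {set I} | `[< lin_indep f S >]) #|S|.

Definition swap_fun (n : nat) (k : 'I_(2 * n)) : 'I_(2 * n) :=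
  @insubd nat (fun m => m < 2 * n)%N _ k (if odd k then k.-1 else k.+1)%N.

Lemma swap_fun_lt n (k : 'I_(2 * n)) :
  ((if odd k then k.-1 else k.+1) < 2 * n)%N.
Proof.
case: k => k hk /=; case ok: (odd k).
  by apply: leq_ltn_trans hk; apply: leq_pred.
rewrite ltn_neqAle hk andbT; apply/eqP => e.
by move: ok; rewrite -[odd k]negbK -/(odd k.+1) e oddM /=.
Qed.

Lemma swap_fun_inj n : injective (@swap_fun n).
Proof.
move=> x y; rewrite /swap_fun => /(congr1 val); rewrite !val_insubd !swap_fun_lt.
case: x => x hx; case: y => y hy /= e; apply: val_inj => /=; move: e.
case ox: (odd x); case oy: (odd y) => /=.
- by case: x ox {hx} => // x ox; case: y oy {hy} => // y oy /= ->.
- case: x ox {hx} => // x /= ox e; exfalso.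
  by move: ox; rewrite e /= oy.
- case: y oy {hy} => // y /= oy e; exfalso.
  by move: oy; rewrite -e /= ox.
- by case.
Qed.

(* Sigma_0 = (1 2)(3 4)...(2n-1 2n), 0-indexed: 2m <-> 2m+1 *)
Definition Sigma0 (n : nat) : 'S_(2 * n) := perm (@swap_fun_inj n).

(* H = S_n[S_2] = centralizer of Sigma0 *)
Definition Hwr (n : nat) : {set 'S_(2 * n)} :=
  [set g : 'S_(2 * n) | (g * Sigma0 n * g^-1)%g == Sigma0 n].

Definition delta (R : nzRingType) (m : nat) (g : 'S_m) : R := (g == 1%g)%:R.

Definition var_idx (Nf Nc : nat) := ('I_Nf * 'I_Nc * 'I_Nc)%type.
Definition nvars (Nf Nc : nat) := #|{: var_idx Nf Nc}|.

Definition Phi (Nf Nc : nat) (a : 'I_Nf) (i j : 'I_Nc)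
  : {mpoly algC[nvars Nf Nc]} := 'X_(enum_rank (a, i, j)).

(* color of position k (0-indexed): c_{2m} = c_{2m+1} = a_m *)
Definition pos_pair (n : nat) (k : 'I_(2 * n)) : 'I_n.
Proof.
refine (@Ordinal n (k./2) _).
case: k => k hk /=; rewrite -divn2 ltn_divLR // mulnC //.
Defined.

Definition mesonic (n Nf Nc : nat) (alpha : 'S_(2 * n))
  : {mpoly algC[nvars Nf Nc]} :=
  \sum_(a : {ffun 'I_n -> 'I_Nf}) \sum_(i : {ffun 'I_(2 * n) -> 'I_Nc})
    \prod_(k : 'I_(2 * n)) Phi (a (pos_pair k)) (i k) (i (alpha k)).

From HB Require Import structures.
From mathcomp Require Import all_boot all_order all_algebra all_fingroup all_field.
From mathcomp Require Import boolp mpoly zify.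
Set Implicit Arguments. Unset Strict Implicit. Unset Printing Implicit Defensive.
Import GRing.Theory Num.Theory.
Local Open Scope ring_scope.

(* Conjugating alpha by gamma in H, the centraliser of Sigma0, only relabels
   the colour indices by gamma and the flavour indices by the permutation that
   gamma induces on the pairs {2m-1, 2m}; hence O_alpha depends only on the
   H-orbit of alpha, and the dimension is at most the number of orbits.
   Conversely, as N_f >= n and N_c >= 2n, every pair can be given its own
   flavour and every position its own colour: the resulting monomial is a
   product of 2n distinct variables, and any term of O_beta equal to it
   exhibits an element of H conjugating beta to alpha.  So the coefficients
   of these monomials separate orbit representatives, which are therefore
   linearly independent.  The two averaged formulas are Burnside's lemma. *)

Section SpanDim.
Variables (F : fieldType) (V : lmodType F) (I : finType) (f : I -> V).

Lemma leq_card_span_dim (S : {set I}) : lin_indep f S -> (#|S| <= span_dim f)%N.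
Proof.
by move=> fS; apply: (leq_bigmax_cond (F := fun S : {set I} => #|S|)); apply/asboolP.
Qed.

Lemma span_dim_le_card_imset (J : finType) (h : I -> J) :
  (forall i j, h i = h j -> f i = f j) -> (span_dim f <= #|h @: [set: I]|)%N.
Proof.
move=> fh; apply/bigmax_leqP => S /asboolP fS.
rewrite -(card_in_imset (f := h)); first exact/subset_leq_card/imsetS/subsetT.
move=> x y xS yS /fh fxy; apply/eqP/contraT => nxy.
have sum_pick z : z \in S -> \sum_(i in S) (i == z)%:R *: f i = f z.
  move=> zS; rewrite (bigD1 z) //= eqxx scale1r big1 ?addr0 // => i /andP[_ /negbTE->].
  exact: scale0r.
have := fS (fun i => (i == x)%:R - (i == y)%:R).
under eq_bigr do rewrite scalerBl.
rewrite sumrB !sum_pick // fxy subrr => /(_ erefl x xS).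
by rewrite eqxx (negbTE nxy) subr0 => /eqP; rewrite oner_eq0.
Qed.

Lemma lin_indep_diag (S : {set I}) (phi : I -> {scalar V}) :
  {in S &, forall i j, (phi i (f j) != 0) = (i == j)} -> lin_indep f S.
Proof.
move=> diag c fS0 i iS; have /eqP := congr1 (phi i) fS0.
rewrite raddf_sum raddf0 (bigD1 i) //= big1 ?addr0 => [|j /andP[jS nji]].
  by rewrite scalarZ mulf_eq0 => /orP[/eqP //|]; rewrite -[_ == 0]negbK diag // eqxx.
rewrite scalarZ (_ : phi i (f j) = 0) ?mulr0 //.
by apply/eqP; apply: negbFE; rewrite diag // eq_sym (negbTE nji).
Qed.
End SpanDim.

Lemma half_swap k : (if odd k then k.-1 else k.+1)./2 = k./2.
Proof.
case: k => [|k] //=; rewrite uphalf_half.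
by case: (odd k) => //=; rewrite uphalf_half.
Qed.

Lemma swap_neq k : (if odd k then k.-1 else k.+1) != k.
Proof. by case: k => [|k] //=; case: ifP => _; lia. Qed.

Lemma eq_half_swap x y : x./2 = y./2 -> y != x -> y = (if odd x then x.-1 else x.+1).
Proof.
move=> xy; have := odd_double_half x; have := odd_double_half y; rewrite -xy -!muln2.
by case: (odd x); case: (odd y) => /= ey ex; lia.
Qed.

Section Sigma0.
Variable n : nat.
Local Notation p := (@pos_pair n).
Local Notation S0 := (Sigma0 n).

Lemma Sigma0E k : val (S0 k) = (if odd k then k.-1 else k.+1)%N.
Proof. by rewrite permE /swap_fun val_insubd swap_fun_lt. Qed.

Lemma pos_pair_Sigma0 k : p (S0 k) = p k.
Proof. by apply: val_inj; rewrite /= Sigma0E half_swap. Qed.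

Lemma Sigma0_neq k : S0 k != k.
Proof. by rewrite -(inj_eq val_inj) Sigma0E swap_neq. Qed.

Lemma eq_pos_pair_Sigma0 x y : p x = p y -> y != x -> y = S0 x.
Proof.
move=> /(congr1 val) /= xy yx; apply: val_inj; rewrite Sigma0E.
by apply: eq_half_swap; rewrite // (inj_eq val_inj).
Qed.

Lemma Sigma0K : involutive S0.
Proof.
move=> k; apply/esym/eq_pos_pair_Sigma0; first exact: pos_pair_Sigma0.
by rewrite eq_sym Sigma0_neq.
Qed.

Lemma mulSigma0Sigma0 : (S0 * S0 = 1)%g.
Proof. by apply/permP => k; rewrite permM Sigma0K perm1. Qed.

Lemma Hwr_cent : Hwr n = 'C[S0]%g.
Proof.
apply/setP => g; rewrite inE; apply/eqP/cent1P => [e | c].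
  by rewrite /commute -{2}e mulgKV.
by rewrite c mulgK.
Qed.

Lemma cent_Sigma0P (g : 'S_(2 * n)) :
  reflect (forall k, g (S0 k) = S0 (g k)) (g \in 'C[S0]%g).
Proof.
apply: (iffP cent1P) => [gS0 k | gS0]; first by rewrite -!permM gS0.
by apply/permP => k; rewrite !permM gS0.
Qed.

Lemma twice_subproof (m : 'I_n) : (2 * m < 2 * n)%N.
Proof. by rewrite ltn_mul2l /=. Qed.

Definition twice (m : 'I_n) : 'I_(2 * n) := Ordinal (twice_subproof m).

Lemma pos_pair_twice m : p (twice m) = m.
Proof. by apply: val_inj; rewrite /= mul2n doubleK. Qed.

End Sigma0.

Lemma ffun_perm_inj (T : finType) (U : Type) (s : {perm T}) :
  injective (fun h : {ffun T -> U} => [ffun x => h (s x)]).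
Proof.
move=> h1 h2 /ffunP e; apply/ffunP => x.
by have := e (s^-1 x)%g; rewrite !ffunE permKV.
Qed.

Section CentInvariance.
Variables (n : nat) (g : 'S_(2 * n)).
Hypothesis gC : g \in 'C[Sigma0 n]%g.
Local Notation p := (@pos_pair n).

Definition pair_map (m : 'I_n) : 'I_n := p (g (twice m)).

Lemma pos_pair_cent k : p (g k) = pair_map (p k).
Proof.
rewrite /pair_map; have [kt | tk] := eqVneq k (twice (p k)); first by rewrite {1}kt.
rewrite {1}(eq_pos_pair_Sigma0 (pos_pair_twice (p k)) tk).
by rewrite (cent_Sigma0P _ gC) pos_pair_Sigma0.
Qed.

Lemma pair_map_inj : injective pair_map.
Proof.
suff qK : cancel (fun m => p (g^-1 (twice m)))%g pair_map.
  exact: can_inj (canF_sym qK).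
by move=> m; rewrite -pos_pair_cent permKV pos_pair_twice.
Qed.

Definition pair_perm : {perm 'I_n} := perm pair_map_inj.

Lemma mesonic_conjg (Nf Nc : nat) (a : 'S_(2 * n)) :
  mesonic Nf Nc (a ^ g)%g = mesonic Nf Nc a.
Proof.
apply/esym; rewrite /mesonic (reindex_inj (@ffun_perm_inj _ _ pair_perm)).
apply: eq_bigr => b _; rewrite (reindex_inj (@ffun_perm_inj _ _ g)).
apply: eq_bigr => i _; rewrite [RHS](reindex_inj (@perm_inj _ g)).
by apply: eq_bigr => k _; rewrite !ffunE permE pos_pair_cent permJ.
Qed.

End CentInvariance.

Lemma mnm_sum_U_fibre (N : nat) (T : finType) (u : T -> 'I_N) w :
  (\sum_k U_(u k))%MM w = #|[pred k | u k == w]|.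
Proof.
rewrite mnm_sumE -sum1_card [RHS]big_mkcond /=.
by apply: eq_bigr => k _; rewrite mnm1E inE; case: eqP.
Qed.

Lemma mnm_sum_U_perm (N : nat) (T : finType) (u v : T -> 'I_N) : injective v ->
  (\sum_k U_(u k))%MM = (\sum_k U_(v k))%MM -> exists s : {perm T}, forall k, u k = v (s k).
Proof.
move=> v_inj uv.
have fibre w : #|[pred k | u k == w]| = #|[pred k | v k == w]|.
  by rewrite -!mnm_sum_U_fibre uv.
have u_fibre_le1 w : (#|[pred k | u k == w]| <= 1)%N.
  by rewrite fibre; apply/card_le1_eqP => x y; rewrite !inE => /eqP <- /eqP /v_inj.
have u_inj : injective u.
  by move=> x y uxy; apply: (card_le1_eqP (u_fibre_le1 (u y))); rewrite inE ?uxy.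
have /all_sig[s0 /(_ _)/eqP s0P] k : {k' | v k' == u k}.
  apply: sigW; apply/card_gt0P; rewrite -fibre.
  by apply/card_gt0P; exists k; rewrite inE.
have s0_inj : injective s0 by move=> x y sxy; apply: u_inj; rewrite -!s0P sxy.
by exists (perm s0_inj) => k; rewrite permE s0P.
Qed.

Section MesonicMonomials.
Variables (n Nf Nc : nat).
Local Notation p := (@pos_pair n).
Local Notation NV := (nvars Nf Nc).

Definition mesonic_mnm (a : 'I_n -> 'I_Nf) (i : 'I_(2 * n) -> 'I_Nc) (al : 'S_(2 * n))
  : 'X_{1..NV} :=
  (\sum_(k : 'I_(2 * n)) U_(enum_rank (a (p k), i k, i (al k))))%MM.

Lemma mesonic_termE (a : 'I_n -> 'I_Nf) (i : 'I_(2 * n) -> 'I_Nc) (al : 'S_(2 * n)) :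
  \prod_(k : 'I_(2 * n)) Phi (a (p k)) (i k) (i (al k)) = 'X_[mesonic_mnm a i al].
Proof. by rewrite (big_morph (@mpolyX NV algC) (@mpolyXD NV algC) (@mpolyX0 NV algC)). Qed.

Lemma mcoeff_mesonic al m : (mesonic Nf Nc al)@_m =
  #|[pred ai : {ffun 'I_n -> 'I_Nf} * {ffun 'I_(2 * n) -> 'I_Nc} |
     mesonic_mnm ai.1 ai.2 al == m]|%:R.
Proof.
rewrite /mesonic pair_big raddf_sum -sum1_card natr_sum [RHS]big_mkcond /=.
by apply: eq_bigr => ai _; rewrite inE mesonic_termE mcoeffX; case: eqP.
Qed.

Lemma mcoeff_mesonic_neq0 al m : ((mesonic Nf Nc al)@_m != 0) =
  [exists ai : {ffun 'I_n -> 'I_Nf} * {ffun 'I_(2 * n) -> 'I_Nc},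
     mesonic_mnm ai.1 ai.2 al == m].
Proof. by rewrite mcoeff_mesonic pnatr_eq0 -lt0n. Qed.

End MesonicMonomials.

Section GenericMonomial.
Variables (n Nf Nc : nat).
Hypotheses (hNc : (2 * n <= Nc)%N) (hNf : (n <= Nf)%N).
Local Notation p := (@pos_pair n).
Local Notation S0 := (Sigma0 n).
Local Notation fl := (widen_ord hNf).
Local Notation col := (widen_ord hNc).

Definition generic_mnm (al : 'S_(2 * n)) := mesonic_mnm fl col al.

Lemma generic_mnm_class (a : 'I_n -> 'I_Nf) (i : 'I_(2 * n) -> 'I_Nc) (al b : 'S_(2 * n)) :
  mesonic_mnm a i b = generic_mnm al -> b \in (al ^: 'C[S0])%g.
Proof.
have col_inj : injective col by move=> x y /(congr1 val) /= /val_inj.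
have fl_inj : injective fl by move=> x y /(congr1 val) /= /val_inj.
case/mnm_sum_U_perm => [x y|s s_tri].
  by move=> /enum_rank_inj /(congr1 (fun t => t.1.2)) /= /col_inj.
have tri k : [/\ a (p k) = fl (p (s k)), i k = col (s k) & i (b k) = col (al (s k))].
  have /eqP := enum_rank_inj (s_tri k).
  by rewrite !xpair_eqE => /andP[/andP[/eqP-> /eqP->] /eqP->].
have s_b k : s (b k) = al (s k).
  by apply: col_inj; case: (tri (b k)) => _ <- _; case: (tri k).
have sC : s \in 'C[S0]%g.
  apply/cent_Sigma0P => k; apply: eq_pos_pair_Sigma0; last first.
    by rewrite (inj_eq perm_inj) Sigma0_neq.
  apply: fl_inj; case: (tri k) => <- _ _; case: (tri (S0 k)) => <- _ _.
  by rewrite pos_pair_Sigma0.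
have -> : b = (al ^ s^-1)%g.
  by apply/permP => k; rewrite conjgE invgK !permM -s_b permK.
by rewrite memJ_class ?groupV.
Qed.

Lemma mcoeff_mesonic_generic (al b : 'S_(2 * n)) :
  ((mesonic Nf Nc b)@_(generic_mnm al) != 0) = (b \in (al ^: 'C[S0])%g).
Proof.
apply/idP/idP => [|/imsetP[g gC ->]].
  by rewrite mcoeff_mesonic_neq0 => /existsP[ai /eqP /generic_mnm_class].
rewrite mesonic_conjg // mcoeff_mesonic_neq0; apply/existsP.
exists ([ffun m => fl m], [ffun k => col k]).
by apply/eqP/eq_bigr => k _; rewrite !ffunE.
Qed.

End GenericMonomial.

Section Dimension.
Variables (n Nf Nc : nat).
Hypotheses (hNc : (2 * n <= Nc)%N) (hNf : (n <= Nf)%N).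
Local Notation C := 'C[Sigma0 n]%G.

Lemma span_dim_le_orbits :
  (span_dim (@mesonic n Nf Nc) <= #|orbit 'J C @: [set: 'S_(2 * n)]|)%N.
Proof.
apply: span_dim_le_card_imset => a b /esym/orbit_eqP/orbitP[g gC <-] /=.
by rewrite mesonic_conjg.
Qed.

Lemma orbits_le_span_dim :
  (#|orbit 'J C @: [set: 'S_(2 * n)]| <= span_dim (@mesonic n Nf Nc))%N.
Proof.
have /orbit_transversalP[trX _ X_uniq _] : [acts C, on [set: 'S_(2 * n)] | 'J].
  by apply/actsP => g _ x; rewrite !inE.
rewrite -(card_transversal trX); apply: leq_card_span_dim.
apply: (@lin_indep_diag _ _ _ _ _ (fun al => mcoeff (generic_mnm hNc hNf al))).
by move=> al b alX bX; rewrite /= mcoeff_mesonic_generic -orbitJ X_uniq.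
Qed.

End Dimension.

Section Burnside.
Variables (R : nzRingType) (m : nat).

Lemma delta_comm_fix (g a : 'S_m) :
  delta R (g * a * g^-1 * a^-1)%g = (a \in ('Fix_([set: 'S_m] | 'J)[g])%g)%:R.
Proof.
rewrite /delta -eq_mulgV1 in_setI in_setT /=; congr (nat_of_bool _)%:R.
apply/eqP/afix1P => /= e.
  by rewrite -{1}e conjgE !mulgA mulVg mul1g mulgKV.
by rewrite -{1}e conjgE !mulgA mulgV mul1g mulgK.
Qed.

Lemma delta_conj_cent (s g : 'S_m) : (s * s = 1)%g ->
  delta R (s * g * s * g^-1)%g = (g \in 'C[s]%g)%:R.
Proof.
move=> ss1; rewrite /delta -eq_mulgV1; congr (nat_of_bool _)%:R.
apply/eqP/cent1P => [e | c].
  by rewrite /commute -{1}e -!mulgA ss1 mulg1.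
by rewrite -c -mulgA ss1 mulg1.
Qed.

Lemma sum_delta_comm (G : {group 'S_m}) :
  \sum_(g in G) \sum_(a : 'S_m) delta R (g * a * g^-1 * a^-1)%g =
  (#|orbit 'J G @: [set: 'S_m]| * #|G|)%:R.
Proof.
have GactT : [acts G, on [set: 'S_m] | 'J] by apply/actsP => g _ x; rewrite !inE.
rewrite -(Frobenius_Cauchy GactT) natr_sum; apply: eq_bigr => g _.
rewrite -sum1_card natr_sum [RHS]big_mkcond.
by apply: eq_bigr => a _; rewrite delta_comm_fix; case: (_ \in _).
Qed.

End Burnside.

Theorem mainTheorem7 (n Nf Nc : nat) :
  (1 <= n)%N -> (2 * n <= Nc)%N -> (2 * n <= Nf)%N ->
  [/\ (span_dim (@mesonic n Nf Nc))%:R =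
        (#|Hwr n|%:R)^-1 *
          \sum_(g in Hwr n) \sum_(a : 'S_(2 * n))
             delta algC (g * a * g^-1 * a^-1)%g,
      (span_dim (@mesonic n Nf Nc))%:R =
        (#|Hwr n|%:R : algC)^-1 *
          \sum_(s : 'S_(2 * n)) \sum_(g : 'S_(2 * n))
             delta algC (g * s * g^-1 * s^-1)%g
             * delta algC (Sigma0 n * g * Sigma0 n * g^-1)%g
    & span_dim (@mesonic n Nf Nc) = #|orbit 'J (Hwr n) @: [set: 'S_(2 * n)]| ].
Proof.
move=> _ hNc hNf2; have hNf : (n <= Nf)%N by lia.
have dimE : span_dim (@mesonic n Nf Nc) = #|orbit 'J (Hwr n) @: [set: 'S_(2 * n)]|.
  by rewrite Hwr_cent; apply/anti_leq; rewrite span_dim_le_orbits ?orbits_le_span_dim.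
have sumE := sum_delta_comm algC 'C[Sigma0 n]%G.
have H_neq0 : (#|'C[Sigma0 n]%G|%:R : algC) != 0 by rewrite pnatr_eq0 -lt0n cardG_gt0.
split=> //; rewrite dimE Hwr_cent.
  by rewrite sumE natrM mulrC mulfK.
rewrite exchange_big /=.
under eq_bigr do rewrite -mulr_suml delta_conj_cent ?mulSigma0Sigma0 // mulr_natr mulrb.
by rewrite -big_mkcond sumE natrM mulrC mulfK.
Qed.
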